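(* For $d\ge1$ and $k\in\{-1,1\}$ let $\overline B(d,k;\lambda,z)=\prod_{m=1}^dB((-1)^{m+1}k;\lambda,z)$ (matrix product, factors ordered from $m=1$ on the left). Then for all $1\le i,j\le N$, $\lambda\in[0,1]$, $z\in(0,1]$, $$[\overline B(d,k;\lambda,z)]_{i,j}=\sum_{w\in\mathbb F_{i,j}^{(k)}(d)}z^{|w|_{\mathcal K}}\,\mathcal R(e_i,w;\lambda).$$
   Context: Fix an integer $N\ge 3$. Let $\mathcal G_N$ be the groupoid with object set $\{1,\dots,N\}$ generated by arrows $A_{i,j}^{(k)}$, $i\neq j\in\{1,\dots,N\}$, $k\in\{-1,1\}$, with source $i$ and target $j$, subject to the relations $A_{i,j}^{(k)}A_{j,\ell}^{(k)}=A_{i,\ell}^{(k)}$ for all $i,j,\ell$, $k$, with the convention $A_{i,i}^{(k)}:=e_i$ (unit at object $i$). Let $\mathcal A$ be its arrow set and $\mathcal A_i$ the arrows with source $i$. Every arrow has a unique reduced representation: either empty or $A_{i_1,i_2}^{(k)}A_{i_2,i_3}^{(-k)}\cdots A_{i_d,i_{d+1}}^{((-1)^{d+1}k)}$ with $d\ge1$, $i_\ell\ne i_{\ell+1}$; $|w|$ denotes its number $d$ of generators. A metric $|\cdot|_{\mathcal K}$ is given by values $|A_{i,j}^{(k)}|_{\mathcal K}\ge0$ on generators, $|e_i|_{\mathcal K}=0$, and $|w|_{\mathcal K}$ the sum of the values of the generators in the reduced representation of $w$. Let $\mathbb F_{i,j}^{(k)}(d)$ be the set of $w\in\mathcal A_i$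 with $|w|=d$, target $j$, and whose reduced representation has first generator with upper index $k$. Let $\{W_n\}_{n\ge0}$ be the Markov chain on $\mathcal A$ with $P(W_{n+1}=y\mid W_n=x)=p_{i,j}^{(k)}$ if $x^{-1}y=A_{i,j}^{(k)}$ with $i\ne j$ and $0$ otherwise, where $p_{i,j}^{(k)}\in(0,1)$ and $\sum_{j\ne i}\sum_{k=\pm1}p_{i,j}^{(k)}=1$ for each $i$; $P_x,E_x$ denote law and expectation with $W_0=x$. Let $\mathcal R(e_i,w;\lambda)=\sum_{n\ge0}P_{e_i}(\inf\{m\ge0:W_m=w\}=n)\lambda^n$. For $x\in\mathcal A$ let $T(0,x)=\inf\{n\ge0:W_n=W_0x\}$ and $R_{i,j}^{(k)}(\lambda)=E_{e_i}[\lambda^{T(0,A_{i,j}^{(k)})}]$. Let $B(k;\lambda,z)$ be the $N\times N$ matrix with $[B(k;\lambda,z)]_{i,j}=(1-\delta_{i,j})z^{|A_{i,j}^{(k)}|_{\mathcal K}}R_{i,j}^{(k)}(\lambda)$. *)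

From HB Require Import structures.
From mathcomp Require Import all_boot all_order all_algebra.
From mathcomp Require Import all_classical all_reals all_analysis.
Set Implicit Arguments. Unset Strict Implicit. Unset Printing Implicit Defensive.
Import Order.TTheory GRing.Theory Num.Theory.
Local Open Scope ring_scope.

(* Upper indices k in {-1,1} are encoded by booleans: true <-> 1, false <-> -1.
   Objects {1,...,N} are encoded by 'I_N. *)

(* An arrow of the groupoid G_N, in its (unique) reduced representation:
   (i, k, [:: i_2; ...; i_{d+1}]) stands for
     A_{i,i_2}^{(k)} A_{i_2,i_3}^{(-k)} ... A_{i_d,i_{d+1}}^{((-1)^{d+1}k)}
   (source i, |w| = d), and (i, true, [::]) stands for the unit e_i. *)
Definition arrow (N : nat) := ('I_N * bool * seq 'I_N)%type.

Section Groupoid.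
Variable N : nat.

Definition a_src (w : arrow N) : 'I_N := w.1.1.
Definition a_sgn (w : arrow N) : bool := w.1.2.
Definition a_path (w : arrow N) : seq 'I_N := w.2.

Definition unit_arrow (i : 'I_N) : arrow N := (i, true, [::]).

Definition a_tgt (w : arrow N) : 'I_N := last (a_src w) (a_path w).

Definition a_len (w : arrow N) : nat := size (a_path w).

(* upper index of the m-th generator (m >= 1) when the first one has index k:
   (-1)^{m+1} k *)
Definition alt_sgn (k : bool) (m : nat) : bool := if odd m then k else ~~ k.

(* validity: consecutive objects distinct, and the unit normalised *)
Definition reduced (w : arrow N) : bool :=
  path (fun x y => x != y) (a_src w) (a_path w)
  && ((a_path w == [::]) ==> a_sgn w).

(* right multiplication of an arrow x by the generator A_{tgt x, b}^{(k)}
   (with A_{a,a}^{(k)} = e_a), computed on reduced representations using the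
   relations A_{a,c}^{(k)} A_{c,b}^{(k)} = A_{a,b}^{(k)}. *)
Definition mul_gen (x : arrow N) (b : 'I_N) (k : bool) : arrow N :=
  let i := a_src x in
  let s := a_path x in
  if b == a_tgt x then x else
  if s is [::] then (i, k, [:: b]) else
  let ls := alt_sgn (a_sgn x) (size s) in
  if k != ls then (i, a_sgn x, rcons s b) else
  let s' := take (size s).-1 s in
  if last i s' == b then
    (if s' is [::] then unit_arrow i else (i, a_sgn x, s'))
  else (i, a_sgn x, rcons s' b).

Definition a_metric {R : numDomainType} (K : 'I_N -> 'I_N -> bool -> R)
    (w : arrow N) : R :=
  \sum_(m < a_len w)
     K (nth (a_src w) (a_src w :: a_path w) m)
       (nth (a_src w) (a_path w) m) (alt_sgn (a_sgn w) m.+1).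

Definition inF (i j : 'I_N) (k : bool) (d : nat) (w : arrow N) : bool :=
  [&& a_src w == i, reduced w, a_len w == d, a_tgt w == j & a_sgn w == k].

End Groupoid.

Section Chain.
Variables (R : realType) (N : nat) (p : 'I_N -> 'I_N -> bool -> R).

(* one-step transition weight from x when the step is the generator
   A_{tgt x, b}^{(k)}: P(W_{n+1} = x A | W_n = x) = p_{tgt x, b}^{(k)}, b <> tgt x *)
Definition step_prob (x : arrow N) (st : 'I_N * bool) : R :=
  if st.1 != a_tgt x then p (a_tgt x) st.1 st.2 else 0.

Definition traj (x : arrow N) (st : seq ('I_N * bool)) : seq (arrow N) :=
  x :: scanl (fun y s => mul_gen y s.1 s.2) x st.

(* P_x( inf{m >= 0 : W_m = w} = n ), computed on the path space of length n:
   sum over all step sequences of the product of transition probabilities,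
   restricted to trajectories avoiding w at times 0..n-1 and at w at time n. *)
Definition first_passage (x w : arrow N) (n : nat) : R :=
  \sum_(st : n.-tuple ('I_N * bool))
    (\prod_(m < n) step_prob (nth x (traj x st) m) (tnth st m))
    * ((all (fun y => y != w) (take n (traj x st))
        && (last x (traj x st) == w))%:R).

Definition Rgf (x w : arrow N) (lam : R) : R :=
  limn (fun M => \sum_(0 <= n < M) first_passage x w n * lam ^+ n).

(* R_{i,j}^{(k)}(lambda) = E_{e_i}[lambda^{T(0, A_{i,j}^{(k)})}]
   = sum_n P_{e_i}(T(0,A_{i,j}^{(k)}) = n) lambda^n, where
   T(0,A) is the hitting time of W_0 A = A_{i,j}^{(k)} when W_0 = e_i. *)
Definition Rij (i j : 'I_N) (k : bool) (lam : R) : R :=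
  Rgf (unit_arrow i) (i, k, [:: j]) lam.

Definition Bmx (K : 'I_N -> 'I_N -> bool -> R) (k : bool) (lam z : R)
  : 'M[R]_N :=
  \matrix_(i, j) (if i != j then z `^ (K i j k) * Rij i j k lam else 0).

Definition Bbar (K : 'I_N -> 'I_N -> bool -> R) (d : nat) (k : bool)
    (lam z : R) : 'M[R]_N :=
  foldr (fun m acc => Bmx K (alt_sgn k m) lam z *m acc) 1%:M (iota 1 d).

End Chain.

From HB Require Import structures.
From mathcomp Require Import all_boot all_order all_algebra.
From mathcomp Require Import all_classical all_reals all_analysis.
Import Order.TTheory GRing.Theory Num.Theory.
Local Open Scope ring_scope.
Set Implicit Arguments. Unset Strict Implicit. Unset Printing Implicit Defensive.

(* The reduced words of G_N form a tree, so a walk started at e_i can reach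
   w = A_{i,l}^{(k)} w', with w' non-trivial, only after visiting A_{i,l}^{(k)}; from
   there on, by left invariance of the walk, the remaining passage is a copy of the
   passage from e_l to w'.  Splitting at that first visit turns the first-passage
   generating function into a Cauchy product, R(e_i, w) = R_{i,l}^{(k)} R(e_l, w').
   As |.|_K is additive along the reduced word too, expanding the matrix product
   by induction on d yields the sum over F_{i,j}^{(k)}(d). *)

Lemma sum_convolution_triangle (R : pzSemiRingType) (F G : nat -> R) (L : nat) :
  \sum_(n < L) \sum_(a < n.+1) F a * G (n - a)%N =
  \sum_(a < L) F a * \sum_(b < L - a) G b.
Proof.
elim: L => [|L IH]; first by rewrite !big_ord0.
rewrite big_ord_recr /= IH [in RHS]big_ord_recr /= big_ord_recr /= subSnn big_ord1 subnn.
rewrite addrA -big_split /=; congr (_ + _).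
by apply: eq_bigr => a _; rewrite -mulrDr subSn 1?ltnW // big_ord_recr.
Qed.

Section NonnegativeSeries.
Variable R : realType.

Lemma cvgn_psum_ge0 (H : nat -> R) (B : R) : (forall n, 0 <= H n) ->
  (forall M, \sum_(0 <= n < M) H n <= B) -> cvgn (fun M => \sum_(0 <= n < M) H n).
Proof.
move=> H0 HB; apply: nondecreasing_is_cvgn; first exact: nondecreasing_series.
by exists B => _ [M _ <-].
Qed.

Lemma lim_psum_convolution (F G C : nat -> R) (BF BG : R) :
  (forall n, 0 <= F n) -> (forall n, 0 <= G n) ->
  (forall M, \sum_(0 <= n < M) F n <= BF) ->
  (forall M, \sum_(0 <= n < M) G n <= BG) ->
  (forall n, C n = \sum_(a < n.+1) F a * G (n - a)%N) ->
  limn (fun M => \sum_(0 <= n < M) C n) =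
  limn (fun M => \sum_(0 <= n < M) F n) * limn (fun M => \sum_(0 <= n < M) G n).
Proof.
move=> F0 G0 FB GB hC.
pose SF M := \sum_(0 <= n < M) F n; pose SG M := \sum_(0 <= n < M) G n.
pose SC M := \sum_(0 <= n < M) C n; change (limn SC = limn SF * limn SG).
have ndG : nondecreasing_seq SG by exact: nondecreasing_series.
have SCE M : SC M = \sum_(a < M) F a * SG (M - a)%N.
  rewrite /SC /SG big_mkord; under [in RHS]eq_bigr do rewrite big_mkord.
  by rewrite -sum_convolution_triangle; apply: eq_bigr => n _; exact: hC.
have le_SC_SFG M : SC M <= SF M * SG M.
  rewrite SCE /SF big_mkord big_distrl; apply: ler_sum => a _.
  by rewrite ler_wpM2l // ndG // leq_subr.
have le_SFG_SC M : SF M * SG M <= SC (M + M)%N.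
  rewrite SCE /SF big_mkord big_distrl (big_ord_widen _ (fun a => F a * SG M) (leq_addr M M)) big_mkcond.
  apply: ler_sum => a _; case: ifP => [aM|_]; last by rewrite mulr_ge0 ?sumr_ge0.
  by rewrite ler_wpM2l // ndG // -addnBA ?leq_addr // ltnW.
have cF : cvgn SF := cvgn_psum_ge0 F0 FB.
have cG : cvgn SG := cvgn_psum_ge0 G0 GB.
have C0 n : 0 <= C n by rewrite hC sumr_ge0 // => a _; rewrite mulr_ge0.
have cC : cvgn SC.
  apply: (@cvgn_psum_ge0 C (BF * BG)) => // M.
  apply: le_trans (le_SC_SFG M) (ler_pM _ _ (FB M) (GB M)); by apply: sumr_ge0 => n _.
rewrite -limM //; apply/eqP; rewrite eq_le; apply/andP; split.
  by apply: ler_lim => //; [exact: is_cvgM | near=> M; exact: le_SC_SFG].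
apply: limr_le; first exact: is_cvgM.
near=> M; apply: le_trans (le_SFG_SC M) _.
apply: (nondecreasing_cvgn_le _ cC); exact: nondecreasing_series.
Unshelve. all: by end_near.
Qed.

End NonnegativeSeries.

Lemma sum_tuple0 (V : nmodType) (T : finType) (F : 0.-tuple T -> V) :
  \sum_(t : 0.-tuple T) F t = F [tuple].
Proof. by rewrite (big_pred1 [tuple]) // => t; rewrite [t]tuple0; apply/eqP. Qed.

Lemma sum_tupleS (V : nmodType) (T : finType) (n : nat) (F : n.+1.-tuple T -> V) :
  \sum_(t : n.+1.-tuple T) F t = \sum_(x : T) \sum_(t : n.-tuple T) F [tuple of x :: t].
Proof.
rewrite pair_big (reindex (fun xt : T * n.-tuple T => [tuple of xt.1 :: xt.2])) //=.
exists (fun t : n.+1.-tuple T => (thead t, [tuple of behead t])) => [[x t] _|t _].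
  by congr (_, _); apply: val_inj.
by apply: val_inj; rewrite /= [in RHS](tuple_eta t).
Qed.

Section Groupoid.
Variable N : nat.
Implicit Types (x y : arrow N) (i l b c e : 'I_N) (k kk : bool) (s t : seq 'I_N).

Lemma alt_sgnS k m : alt_sgn k m.+1 = alt_sgn (~~ k) m.
Proof. by rewrite /alt_sgn /=; case: (odd m); case: k. Qed.

Lemma mul_gen_nil i k b kk :
  mul_gen (i, k, [::]) b kk = if b == i then (i, k, [::]) else (i, kk, [:: b]).
Proof. by []. Qed.

Lemma mul_gen_rcons i k s e b kk :
  mul_gen (i, k, rcons s e) b kk =
  if b == e then (i, k, rcons s e) else
  if kk != alt_sgn k (size s).+1 then (i, k, rcons (rcons s e) b) else
  if last i s == b then (if s is [::] then unit_arrow i else (i, k, s))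
  else (i, k, rcons s b).
Proof.
rewrite /mul_gen /a_tgt /a_path /a_src /a_sgn /= last_rcons size_rcons.
by case: s => [|c s] //=; rewrite -cats1 take_size_cat.
Qed.

Lemma mul_gen_src x b kk : a_src (mul_gen x b kk) = a_src x.
Proof.
case: x => [[i k] s]; case/lastP: s => [|s e].
  by rewrite mul_gen_nil; case: ifP.
by rewrite mul_gen_rcons; do 3?case: ifP => //; case: s.
Qed.

Lemma reduced_mul_gen x b kk : reduced x -> reduced (mul_gen x b kk).
Proof.
case: x => [[i k] s]; rewrite /reduced /a_src /a_path /a_sgn /=.
case/lastP: s => [|s e].
  by rewrite mul_gen_nil; case: ifP => //= /negbT; rewrite eq_sym => ->.
rewrite mul_gen_rcons rcons_path -size_eq0 size_rcons /= andbT => /andP [ps le].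
case: ifP => [_|/negbT be]; first by rewrite rcons_path ps le -size_eq0 size_rcons.
case: ifP => _; first by rewrite !rcons_path ps le last_rcons eq_sym be -size_eq0 !size_rcons.
case: ifP => [_|/negbT lb]; first by case: (s) ps => //= c s' /andP [-> ->].
by rewrite /= rcons_path ps lb -size_eq0 size_rcons.
Qed.

(* [lmul_gen i l k y] is the product A_{i,l}^{(k)} y, for [y] with source [l]. *)
Definition lmul_gen i l k y : arrow N :=
  match a_path y with
  | [::] => (i, k, [:: l])
  | c :: s => if a_sgn y != k then (i, k, l :: c :: s)
              else if c == i then (if s is [::] then unit_arrow i else (i, ~~ k, s))
              else (i, k, c :: s)
  end.

Lemma lmul_gen_tgt i l k y : a_src y = l -> a_tgt (lmul_gen i l k y) = a_tgt y.
Proof.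
case: y => [[l' k'] [|c s]]; rewrite /a_src /lmul_gen /a_tgt /= => -> //.
by case: ifP => // _; case: ifP => [/eqP ->|_] //; case: s.
Qed.

Ltac case_eq_test := rewrite /= ?eqxx /=; try first
  [ match goal with |- context [?a == ?b] =>
      is_var a; is_var b; have [?|?] := eqVneq a b; try subst end
  | match goal with |- context [?a == ?b] => have [?|?] := eqVneq a b; try subst end ].

Ltac case_eq_tests := repeat progress case_eq_test; try done;
  try match goal with H : is_true (?a != ?a) |- _ => by rewrite eqxx in H end.

Lemma lmul_genA i l k y b kk : i != l -> a_src y = l ->
  lmul_gen i l k (mul_gen y b kk) = mul_gen (lmul_gen i l k y) b kk.
Proof.
move=> il; case: y => [[l' k'] s]; rewrite /a_src /= => ->.
(* Multiplications on the left and on the right interact only on words of length <= 2. *)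
have short_words : (size s <= 2)%N ->
    lmul_gen i l k (mul_gen (l, k', s) b kk) = mul_gen (lmul_gen i l k (l, k', s)) b kk.
  case: s => [|c [|e [|//]]] _; case: k'; case: k; case: kk;
  by rewrite /lmul_gen /mul_gen /a_tgt /a_sgn /a_path /a_src /alt_sgn /unit_arrow; case_eq_tests.
case: s short_words => [|c [|c' s]] short_words; try exact: short_words.
case/lastP: s short_words => [|s e] short_words; [exact: short_words | clear short_words].
rewrite -[c :: c' :: rcons s e]/(rcons [:: c, c' & s] e) mul_gen_rcons.
rewrite !(fun_if (fun x => mul_gen x b kk)) !(fun_if (lmul_gen i l k)).
rewrite /lmul_gen /a_sgn /a_path /=.
rewrite -!rcons_cons !mul_gen_rcons /alt_sgn /unit_arrow /= ?negbK.
move: (odd (size s)) (last c' s) => o q.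
by case: o; case: k'; case: k; case: kk; case_eq_tests.
Qed.

Lemma lmul_gen_eq i l k y t : i != l -> a_src y = l -> reduced y -> t != [::] ->
  (lmul_gen i l k y == (i, k, l :: t)) = (y == (l, ~~ k, t)).
Proof.
move=> il; case: y => [[l' k'] s]; rewrite /reduced /a_src /a_path /= => -> /andP [ps _] tn.
apply/eqP/eqP => [|[-> ->]]; last by case: t tn => // c t _; rewrite /lmul_gen /a_sgn /=; case: k.
case: s ps => [|c s] /=; first by rewrite /lmul_gen /= => _ [tE]; move: tn; rewrite -tE.
rewrite /lmul_gen /a_sgn /a_path /= => /andP [lc _].
case: ifP => [kk' [<-]|/negbFE/eqP ->]; first by move: kk'; case: k'; case: k.
case: ifP => _; first by case: s => // c' s [] /eqP; case: k.
by case=> cE; move: lc; rewrite cE eqxx.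
Qed.

(* The reduced word of [x] strictly extends A_{i,l}^{(k)}. *)
Definition below i l k x :=
  [&& a_src x == i, a_sgn x == k & if a_path x is c :: _ :: _ then c == l else false].

Lemma below_mul_gen i l k x b kk : ~~ below i l k x -> x != (i, k, [:: l]) ->
  ~~ below i l k (mul_gen x b kk).
Proof.
case: x => [[i' k'] s]; case/lastP: s => [|s e].
  by rewrite mul_gen_nil; case: ifP => _; rewrite /below /= !andbF.
rewrite mul_gen_rcons; case: s => [|c [|c' s]] nb ng; do 3?case: ifP => _ //;
  move: nb ng; rewrite /below /a_src /a_sgn /a_path /= ?andbF //.
by move=> _; apply: contra => /and3P [/eqP -> /eqP -> /eqP ->].
Qed.
End Groupoid.


Section FirstPassage.
Variables (R : realType) (N : nat) (p : 'I_N -> 'I_N -> bool -> R).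
Hypothesis p_ge0 : forall (i j : 'I_N) (k : bool), i != j -> 0 <= p i j k.
Hypothesis sum_p : forall i : 'I_N, \sum_(j : 'I_N | j != i) \sum_(k : bool) p i j k = 1.
Implicit Types (x y w : arrow N) (i l : 'I_N) (k : bool) (t : seq 'I_N) (lam : R).

Fixpoint first_passage_rec x w n : R :=
  if n is n'.+1 then
    (x != w)%:R * \sum_(st : 'I_N * bool)
                    step_prob p x st * first_passage_rec (mul_gen x st.1 st.2) w n'
  else (x == w)%:R.

Lemma size_traj x (sts : seq ('I_N * bool)) : size (traj x sts) = (size sts).+1.
Proof. by rewrite /traj /= size_scanl. Qed.

Lemma first_passageE x w n : first_passage p x w n = first_passage_rec x w n.
Proof.
elim: n x => [|n IH] x; first by rewrite /first_passage sum_tuple0 big_ord0 mul1r.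
rewrite /first_passage sum_tupleS /= big_distrr; apply: eq_bigr => st _.
rewrite -IH /first_passage !big_distrr; apply: eq_bigr => sts _.
set y := mul_gen x st.1 st.2.
have -> : traj x (st :: sts) = x :: traj y sts by [].
have shift_prod : \prod_(m < n) step_prob p (nth x (x :: traj y sts) (lift ord0 m))
                                      (tnth [tuple of st :: sts] (lift ord0 m))
    = \prod_(m < n) step_prob p (nth y (traj y sts) m) (tnth sts m).
  apply: eq_bigr => m _ /=; rewrite add0n tnthS (set_nth_default y) //.
  by rewrite size_traj size_tuple ltnS ltnW.
rewrite big_ord_recl shift_prod /=.
by case: (x != w); rewrite /= ?(mul1r, mulrA) // !(mul0r, mulr0).
Qed.

Lemma step_prob_ge0 x st : 0 <= step_prob p x st.
Proof. by rewrite /step_prob; case: ifP => // b_tgt; apply: p_ge0; rewrite eq_sym b_tgt. Qed.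

Lemma sum_step_prob x : \sum_(st : 'I_N * bool) step_prob p x st = 1.
Proof.
rewrite -(sum_p (a_tgt x)) [RHS]big_mkcond /=.
rewrite (eq_bigr (fun st => step_prob p x (st.1, st.2))); last by case.
rewrite -(pair_bigA _ (fun b kk => step_prob p x (b, kk))); apply: eq_bigr => b _.
by rewrite /step_prob /=; case: ifP => // _; rewrite big1_eq.
Qed.

Lemma first_passage_rec_ge0 x w n : 0 <= first_passage_rec x w n.
Proof.
elim: n x => [|n IH] x /=; first by rewrite ler0n.
by rewrite mulr_ge0 ?ler0n // sumr_ge0 // => st _; rewrite mulr_ge0 ?step_prob_ge0.
Qed.

Lemma sum_first_passage_rec_le1 x w M : \sum_(0 <= n < M) first_passage_rec x w n <= 1.
Proof.
elim: M x => [|M IH] x; first by rewrite big_geq.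
rewrite big_nat_recl //=; have [->|xw] := eqVneq x w.
  by rewrite big1 ?addr0 // => n _; rewrite mul0r.
rewrite add0r (eq_bigr (fun n => \sum_(st : 'I_N * bool)
    step_prob p x st * first_passage_rec (mul_gen x st.1 st.2) w n)); last first.
  by move=> n _; rewrite mul1r.
rewrite exchange_big /= -(sum_step_prob x); apply: ler_sum => st _.
by rewrite -big_distrr /= -[leRHS]mulr1 ler_wpM2l ?step_prob_ge0.
Qed.

Lemma first_passage_rec_lmul_gen i l k t n y : i != l -> t != [::] ->
  a_src y = l -> reduced y ->
  first_passage_rec (lmul_gen i l k y) (i, k, l :: t) n = first_passage_rec y (l, ~~ k, t) n.
Proof.
move=> il tn; elim: n y => [|n IH] y y_src y_red /=; first by rewrite lmul_gen_eq.
rewrite lmul_gen_eq //; congr (_ * _); apply: eq_bigr => st _.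
rewrite /step_prob lmul_gen_tgt // -lmul_genA // IH ?mul_gen_src //.
exact: reduced_mul_gen.
Qed.

Lemma first_passage_rec_self x n : first_passage_rec x x n = (n == 0)%:R.
Proof. by case: n => [|n] /=; rewrite eqxx // mul0r. Qed.

(* Words below A_{i,l}^{(k)} are entered only through A_{i,l}^{(k)} itself
   ([below_mul_gen]), so the passage splits at the first visit there. *)
Lemma first_passage_rec_split i l k t n y : i != l -> t != [::] -> ~~ below i l k y ->
  first_passage_rec y (i, k, l :: t) n =
  \sum_(a < n.+1) first_passage_rec y (i, k, [:: l]) a *
                  first_passage_rec (unit_arrow l) (l, ~~ k, t) (n - a).
Proof.
move=> il; case: t => // c t _.
have target_below : below i l k (i, k, [:: l, c & t]) by rewrite /below /= !eqxx.
have unit_neq : (unit_arrow l == (l, ~~ k, c :: t)) = false.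
  by rewrite /unit_arrow !xpair_eqE andbF.
have from_gen m : first_passage_rec (i, k, [:: l]) (i, k, [:: l, c & t]) m =
                  first_passage_rec (unit_arrow l) (l, ~~ k, c :: t) m.
  by rewrite -(first_passage_rec_lmul_gen (y := unit_arrow l) k m il).
elim: n y => [|n IH] y y_not_below.
  have /negbTE y_neq : y != (i, k, [:: l, c & t]) by apply: contraNneq y_not_below => ->.
  by rewrite big_ord_recl big_ord0 addr0 /= y_neq unit_neq !mulr0.
have y_neq : y != (i, k, [:: l, c & t]) by apply: contraNneq y_not_below => ->.
have [->|y_gen] := eqVneq y (i, k, [:: l]).
  rewrite from_gen big_ord_recl first_passage_rec_self eqxx mul1r subn0 big1 ?addr0 //.
  by move=> a _; rewrite first_passage_rec_self mul0r.
rewrite /= y_neq mul1r big_ord_recl /= (negbTE y_gen) mul0r add0r.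
under [in RHS]eq_bigr do rewrite mul1r add0n big_distrl /=.
rewrite exchange_big /=; apply: eq_bigr => st _.
rewrite IH; last exact: below_mul_gen.
by rewrite big_distrr /=; apply: eq_bigr => a _; rewrite subSS mulrA.
Qed.

Lemma Rgf_first_passage_rec x w lam :
  Rgf p x w lam = limn (fun M => \sum_(0 <= n < M) first_passage_rec x w n * lam ^+ n).
Proof.
by rewrite /Rgf; under eq_fun do under eq_bigr do rewrite first_passageE.
Qed.

Lemma psum_first_passage_rec_le1 x w lam : 0 <= lam <= 1 ->
  forall M, \sum_(0 <= n < M) first_passage_rec x w n * lam ^+ n <= 1.
Proof.
case/andP=> lam0 lam1 M; apply: le_trans (sum_first_passage_rec_le1 x w M).
by apply: ler_sum => n _; rewrite ler_piMr ?first_passage_rec_ge0 ?exprn_ile1.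
Qed.

Lemma Rgf_cons i l k t lam : i != l -> t != [::] -> 0 <= lam <= 1 ->
  Rgf p (unit_arrow i) (i, k, l :: t) lam =
  Rij p i l k lam * Rgf p (unit_arrow l) (l, ~~ k, t) lam.
Proof.
move=> il tn lam01; have /andP [lam0 _] := lam01; rewrite /Rij !Rgf_first_passage_rec.
apply: (lim_psum_convolution _ _ (psum_first_passage_rec_le1 _ _ lam01)
  (psum_first_passage_rec_le1 _ _ lam01)) => [n|n|n].
- by rewrite mulr_ge0 ?exprn_ge0 ?first_passage_rec_ge0.
- by rewrite mulr_ge0 ?exprn_ge0 ?first_passage_rec_ge0.
rewrite (first_passage_rec_split n il tn); last by rewrite /below /= !andbF.
rewrite big_distrl /=; apply: eq_bigr => a _.
by rewrite mulrACA -exprD subnKC // -ltnS.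
Qed.

End FirstPassage.

Lemma foldr_alt_sgn_iotaS (T : Type) (op : T -> T -> T) (e : T) (F : bool -> T) d k :
  foldr (fun m acc => op (F (alt_sgn k m)) acc) e (iota 1 d.+1) =
  op (F k) (foldr (fun m acc => op (F (alt_sgn (~~ k) m)) acc) e (iota 1 d)).
Proof. by congr (op _ _); elim: d 1%N => [|d IH] m //=; rewrite alt_sgnS IH. Qed.

Section Bbar.
Variables (R : realType) (N : nat) (p K : 'I_N -> 'I_N -> bool -> R).
Implicit Types (i j l : 'I_N) (k : bool) (t : seq 'I_N) (lam z : R).

Lemma BbarS d k lam z : Bbar p K d.+1 k lam z = Bmx p K k lam z *m Bbar p K d (~~ k) lam z.
Proof. exact: (foldr_alt_sgn_iotaS mulmx _ (fun b => Bmx p K b lam z)). Qed.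

Lemma inF1 i j l k : inF i j k 1 (i, k, [:: l]) = (i != l) && (l == j).
Proof. by rewrite /inF /reduced /a_src /a_path /a_sgn /a_len /a_tgt /= !eqxx /= !andbT. Qed.

Lemma inF_cons i j l k d t : t != [::] ->
  inF i j k d.+1 (i, k, l :: t) = (i != l) && inF l j (~~ k) d (l, ~~ k, t).
Proof.
move=> tn; rewrite /inF /reduced /a_src /a_path /a_sgn /a_len /a_tgt /= !eqxx (negbTE tn).
by rewrite /= !andbT; case: (i != l).
Qed.

Lemma a_metric_cons i l k t : a_metric K (i, k, l :: t) = K i l k + a_metric K (l, ~~ k, t).
Proof.
rewrite /a_metric /a_len /a_path /a_src /a_sgn /= big_ord_recl /=; congr (_ + _).
apply: eq_bigr => m _; rewrite /= add0n /bump leq0n add1n alt_sgnS.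
have m_lt : (m < size t)%N := ltn_ord m.
by rewrite (set_nth_default l i m_lt) (set_nth_default l i (ltnW m_lt : (m < size (l :: t))%N)).
Qed.

Hypothesis p_ge0 : forall (i j : 'I_N) (k : bool), i != j -> 0 <= p i j k.
Hypothesis sum_p : forall i : 'I_N, \sum_(j : 'I_N | j != i) \sum_(k : bool) p i j k = 1.

Lemma Bbar_sum_inF d lam z : 0 <= lam <= 1 -> 0 < z -> (0 < d)%N -> forall k i j,
  Bbar p K d k lam z i j =
  \sum_(t : d.-tuple 'I_N | inF i j k d ((i, k, val t) : arrow N))
     z `^ (a_metric K ((i, k, val t) : arrow N))
     * Rgf p (unit_arrow i) ((i, k, val t) : arrow N) lam.
Proof.
move=> lam01 z0; elim: d => [|[|d] IH] // _ k i j.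
  rewrite BbarS mxE [RHS]big_mkcond sum_tupleS; apply: eq_bigr => l _.
  rewrite sum_tuple0 inF1 a_metric_cons /a_metric big_ord0 addr0 !mxE /=.
  by case: (i != l) (l == j) => -[]; rewrite ?(mulr1, mulr0, mul0r).
rewrite BbarS mxE [RHS]big_mkcond sum_tupleS; apply: eq_bigr => l _.
rewrite mxE IH // big_distrr [LHS]big_mkcond; apply: eq_bigr => t _.
have tn : val t != [::] by rewrite -size_eq0 size_tuple.
rewrite inF_cons //; case: (eqVneq i l) => [<-|il] /=; first by rewrite mul0r; case: ifP.
case: ifP => // _; rewrite a_metric_cons powRD; last by rewrite (gt_eqF z0) implybT.
by rewrite Rgf_cons // mulrACA.
Qed.

End Bbar.

Theorem lemma6p3 (R : realType) (N : nat) (hN : (3 <= N)%N)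
  (p : 'I_N -> 'I_N -> bool -> R)
  (hp : forall (i j : 'I_N) (k : bool), i != j -> 0 < p i j k < 1)
  (hsum : forall i : 'I_N, \sum_(j : 'I_N | j != i) \sum_(k : bool) p i j k = 1)
  (K : 'I_N -> 'I_N -> bool -> R)
  (hK : forall (i j : 'I_N) (k : bool), i != j -> 0 <= K i j k)
  (d : nat) (hd : (1 <= d)%N) (k : bool) (i j : 'I_N) (lam z : R)
  (hlam : 0 <= lam <= 1) (hz : 0 < z <= 1) :
  Bbar p K d k lam z i j =
  \sum_(t : d.-tuple 'I_N | inF i j k d ((i, k, val t) : arrow N))
     z `^ (a_metric K ((i, k, val t) : arrow N))
     * Rgf p (unit_arrow i) ((i, k, val t) : arrow N) lam.
Proof.
have p_ge0 (a b : 'I_N) (c : bool) : a != b -> 0 <= p a b c.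
  by move=> ab; case/andP: (hp a b c ab) => /ltW.
by case/andP: hz => z0 _; apply: Bbar_sum_inF.
Qed.
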